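(* Let $(X,d)$ be a compact metric space and $\mathcal{W}$ a uniformly bounded open cover of $X$. Then $\mathrm{Viet}^{\mathrm{m}}(\mathcal{W})$ is strictly strongly locally contractible.
   Context: A cover $\mathcal{W}$ is uniformly bounded if there is $D>0$ with $\mathrm{diam}(W)<D$ for all $W\in\mathcal{W}$. $\mathrm{Viet}^{\mathrm{m}}(\mathcal{W})$ is the set of finitely supported probability measures on $X$ whose support is contained in some element of $\mathcal{W}$, with the $1$-Wasserstein (optimal transport) metric. A space $Y$ is strictly strongly locally contractible if every point $y\in Y$ has a local base of neighborhoods each of which strongly deformation retracts onto $y$, i.e. deformation retracts onto $\{y\}$ via a homotopy fixing $y$ throughout. *)

From HB Require Import structures.
From mathcomp Require Import all_boot all_order all_algebra.
From mathcomp Require Import boolp classical_sets functions cardinality fsbigop reals ereal.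
Set Implicit Arguments. Unset Strict Implicit. Unset Printing Implicit Defensive.
Import Order.TTheory GRing.Theory Num.Theory.
Local Open Scope classical_set_scope.
Local Open Scope ring_scope.

Section MetricDefs.
Variables (R : realType) (X : choiceType) (d : X -> X -> R).

Definition is_metric : Prop :=
  [/\ (forall x y, 0 <= d x y), (forall x y, d x y = 0 <-> x = y),
      (forall x y, d x y = d y x) & (forall x y z, d x z <= d x y + d y z)].

Definition mball (x : X) (r : R) : set X := [set y | d x y < r].

Definition mopen (U : set X) : Prop :=
  forall x, U x -> exists2 r : R, 0 < r & mball x r `<=` U.

Definition mcompact : Prop :=
  forall C : set (set X), (forall U, C U -> mopen U) ->
    (forall x, exists U, C U /\ U x) ->
    exists F : set (set X), [/\ F `<=` C, finite_set F &
                                forall x, exists U, F U /\ U x].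

Definition diam (A : set X) : \bar R :=
  ereal_sup [set z | exists x y, [/\ A x, A y & z = (d x y)%:E]].

Definition unif_bounded (W : set (set X)) : Prop :=
  exists D : R, 0 < D /\ forall A, W A -> (diam A < D%:E)%E.

End MetricDefs.

Section Measures.
Variable (R : realType).

Definition supp (T : choiceType) (f : T -> R) : set T := [set x | f x != 0].

(* finitely supported probability measures, as weight functions *)
Definition fsprob (T : choiceType) (mu : T -> R) : Prop :=
  [/\ (forall x, 0 <= mu x), finite_set (supp mu) &
      \sum_(x \in supp mu) mu x = 1].

Variables (X : choiceType) (d : X -> X -> R).

Definition coupling (mu nu : X -> R) (pi : X * X -> R) : Prop :=
  [/\ (forall p, 0 <= pi p), finite_set (supp pi),
      (forall x, \sum_(y \in supp (fun y => pi (x, y))) pi (x, y) = mu x) &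
      (forall y, \sum_(x \in supp (fun x => pi (x, y))) pi (x, y) = nu y)].

Definition cost (pi : X * X -> R) : R :=
  \sum_(p \in supp pi) pi p * d p.1 p.2.

Definition W1 (mu nu : X -> R) : R :=
  inf [set c | exists pi, coupling mu nu pi /\ c = cost pi].

Definition VietM (W : set (set X)) : set (X -> R) :=
  [set mu | fsprob mu /\ exists A, W A /\ supp mu `<=` A].

End Measures.

Section LocalContractibility.
Variables (R : realType) (T : Type) (Y : set T) (rho : T -> T -> R).

Definition nbhd_in (y : T) (U : set T) : Prop :=
  [/\ U `<=` Y, U y &
      exists2 r : R, 0 < r & forall v, Y v -> rho y v < r -> U v].

Definition sdr_onto_point (U : set T) (y : T) : Prop :=
  exists H : R -> T -> T,
    [/\ (forall t u, 0 <= t <= 1 -> U u -> U (H t u)),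
        (forall u, U u -> H 0 u = u),
        (forall u, U u -> H 1 u = y),
        (forall t, 0 <= t <= 1 -> H t y = y) &
        (forall t u, 0 <= t <= 1 -> U u ->
           forall e : R, 0 < e -> exists2 delta : R, 0 < delta &
             forall s v, 0 <= s <= 1 -> U v -> `|s - t| < delta ->
               rho u v < delta -> rho (H t u) (H s v) < e)].

Definition strictly_strongly_locally_contractible : Prop :=
  forall y, Y y -> forall N, nbhd_in y N ->
    exists U, [/\ nbhd_in y U, U `<=` N & sdr_onto_point U y].

End LocalContractibility.

(* Let y be in Viet^m(W) with supp y inside an open A in W.  A Lipschitz cutoff
   phi : X -> [0,1] vanishes on supp y, is nonzero only at distance >= rho from
   supp y, and is < 1 only inside A.  The contraction first damps a measure v by
   the weight 1 - 2t phi and renormalises (t <= 1/2), then mixes the result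
   linearly with y (t >= 1/2); during the mixing only points with phi < 1 carry
   mass, so every measure on the path still lies in Viet^m(W).

   All these maps have the form v |-> (1 - lam) q v / <q, v> + lam y, and this
   family is closed under composition.  Hence the measures near y that keep more
   than half of their mass on {phi = 0} and whose whole orbit under the family
   stays in a given neighbourhood N form a neighbourhood of y inside N that the
   contraction preserves.  On it the normalising constants <q, v> are >= 1/2,
   and continuity for W1 follows from a partial transport estimate: a
   subcoupling of mass m extends to a coupling at extra cost (1 - m) diam X,
   which is finite since X is compact. *)

From HB Require Import structures.
From mathcomp Require Import all_boot all_order all_algebra.
From mathcomp Require Import boolp classical_sets functions cardinality fsbigop reals ereal.
From mathcomp Require Import ring lra.
Set Implicit Arguments. Unset Strict Implicit. Unset Printing Implicit Defensive.
Import Order.TTheory GRing.Theory Num.Theory.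
Local Open Scope classical_set_scope.
Local Open Scope ring_scope.

Section FinSupportSums.
Variables (R : realType) (T : choiceType).

Lemma fsbig_setT_seq (f : T -> R) (s : seq T) : uniq s ->
  (forall x, f x != 0 -> x \in s) ->
  \sum_(x \in [set: T]) f x = \sum_(x <- s) f x.
Proof.
move=> us hs; rewrite (fsbigE s) //.
- by apply: eq_bigl => i; rewrite in_setT.
- move=> i _ nis; apply/eqP; apply: contraNT nis; exact: hs.
Qed.

Lemma fsbig_supp (f : T -> R) :
  \sum_(x \in supp f) f x = \sum_(x \in [set: T]) f x.
Proof.
apply: fsbig_widen => // x [_ /=]; rewrite /supp /= => /negP; rewrite negbK.
by move/eqP.
Qed.

Lemma finite_set_uniq_seq (A : set T) : finite_set A ->
  exists s : seq T, uniq s /\ forall x, A x -> x \in s.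
Proof.
move=> /finite_seqP [s ->]; exists (undup s); split; first exact: undup_uniq.
by move=> x /= xs; rewrite mem_undup.
Qed.

Lemma fsprob_sum_seq (u : T -> R) s : fsprob u -> uniq s ->
  (forall x, u x != 0 -> x \in s) -> \sum_(x <- s) u x = 1.
Proof. by case=> _ _ h us hs; rewrite -(fsbig_setT_seq us hs) -fsbig_supp. Qed.

End FinSupportSums.

Section SeqSums.
Variables (R : numDomainType) (I : eqType) (r : seq I).

Lemma ler_sum_seq (F G : I -> R) :
  (forall i, i \in r -> F i <= G i) -> \sum_(i <- r) F i <= \sum_(i <- r) G i.
Proof. by move=> h; rewrite big_seq [X in _ <= X]big_seq; apply: ler_sum. Qed.

Lemma sumr_ge0_seq (F : I -> R) :
  (forall i, i \in r -> 0 <= F i) -> 0 <= \sum_(i <- r) F i.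
Proof. by move=> h; rewrite big_seq; apply: sumr_ge0. Qed.

Lemma sumr_eq0_seq (F : I -> R) :
  (forall i, i \in r -> 0 <= F i) -> \sum_(i <- r) F i = 0 ->
  forall i, i \in r -> F i = 0.
Proof.
move=> h0 /eqP; rewrite big_seq psumr_eq0 // => /allP h i ir.
by have /implyP/(_ ir)/eqP := h i ir.
Qed.

Lemma sum_seq_delta (j : I) (F : I -> R) : uniq r -> j \in r ->
  \sum_(i <- r) (if i == j then F i else 0) = F j.
Proof.
move=> ur jr; rewrite (bigD1_seq j) //= eqxx big1_seq ?addr0 //.
by move=> i /andP[/negbTE -> _].
Qed.

End SeqSums.

Section Transport.
Variables (R : realType) (X : choiceType) (d : X -> X -> R).
Hypothesis hd : is_metric d.

Lemma metric_ge0 x x' : 0 <= d x x'. Proof. by case: hd. Qed.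
Lemma metric_xx x : d x x = 0. Proof. by case: hd => _ h _ _; apply/h. Qed.
Lemma metricC x x' : d x x' = d x' x. Proof. by case: hd. Qed.
Lemma metric_triangle x x' x'' : d x x'' <= d x x' + d x' x''.
Proof. by case: hd. Qed.

Definition seq_coupling (s : seq X) (u v : X -> R) (pi : X * X -> R) :=
  [/\ uniq s, (forall p, 0 <= pi p),
      (forall x x', pi (x, x') != 0 -> (x \in s) && (x' \in s)),
      (forall x, \sum_(x' <- s) pi (x, x') = u x) &
      (forall x', \sum_(x <- s) pi (x, x') = v x')].

Definition seq_cost (s : seq X) (pi : X * X -> R) :=
  \sum_(x <- s) \sum_(x' <- s) pi (x, x') * d x x'.

Lemma cost_seq_cost s pi : uniq s ->
  (forall x x', pi (x, x') != 0 -> (x \in s) && (x' \in s)) ->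
  cost d pi = seq_cost s pi.
Proof.
move=> us hs; rewrite /cost.
rewrite (fsbig_widen _ [set: X * X]) //; last first.
  move=> p [_ /=]; rewrite /supp /= => /negP; rewrite negbK => /eqP ->.
  by rewrite mul0r.
rewrite (@fsbig_setT_seq _ _ _ [seq (x, y) | x <- s, y <- s]).
- by rewrite big_allpairs.
- by apply: allpairs_uniq => // -[a b] [a' b'] _ _.
- move=> [x x'] /=; rewrite mulf_eq0 negb_or => /andP[h _].
  by have /andP[h1 h2] := hs _ _ h; apply/allpairsP; exists (x, x').
Qed.

Lemma seq_coupling_coupling s u v pi : seq_coupling s u v pi -> coupling u v pi.
Proof.
case=> us p0 hs hr hc; split => //.
- apply: (@sub_finite_set _ _ [set` [seq (x, y) | x <- s, y <- s]]);
    last exact: finite_seq.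
  move=> [x x'] /= h; have /andP[h1 h2] := hs _ _ h.
  by apply/allpairsP; exists (x, x').
- move=> x; rewrite fsbig_supp (fsbig_setT_seq us) //.
  by move=> x' h; have /andP[] := hs _ _ h.
- move=> x'; rewrite fsbig_supp (fsbig_setT_seq us) //.
  by move=> x h; have /andP[] := hs _ _ h.
Qed.

Lemma coupling_seq_coupling (S : set X) u v pi : finite_set S -> coupling u v pi ->
  exists s, [/\ seq_coupling s u v pi, (forall x, S x -> x \in s) &
                cost d pi = seq_cost s pi].
Proof.
move=> fS [p0 fpi hr hc].
have f : finite_set (S `|` fst @` supp pi `|` snd @` supp pi).
  by rewrite !finite_setU; split; [split|]; rewrite //; apply: finite_image.
have [s [us hs]] := finite_set_uniq_seq f.
have hs2 : forall x x', pi (x, x') != 0 -> (x \in s) && (x' \in s).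
  move=> x x' h; rewrite !hs //; first by right; exists (x, x').
  by left; right; exists (x, x').
exists s; split => //.
- split => // [x|x'].
    rewrite -hr fsbig_supp (fsbig_setT_seq us) // => x' h.
    by have /andP[] := hs2 _ _ h.
  rewrite -hc fsbig_supp (fsbig_setT_seq us) // => x h.
  by have /andP[] := hs2 _ _ h.
- by move=> x h; apply: hs; left; left.
- exact: cost_seq_cost.
Qed.

Lemma seq_coupling_suppl s u v pi x : seq_coupling s u v pi -> u x != 0 -> x \in s.
Proof.
move=> [us p0 hs hr _] h; apply: contraNT h => xs.
rewrite -hr big1 // => x' _; apply/eqP; apply: contraNT xs => h.
by have /andP[] := hs _ _ h.
Qed.

Lemma seq_coupling_suppr s u v pi x : seq_coupling s u v pi -> v x != 0 -> x \in s.
Proof.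
move=> [us p0 hs _ hc] h; apply: contraNT h => xs.
rewrite -hc big1 // => x' _; apply/eqP; apply: contraNT xs => h.
by have /andP[] := hs _ _ h.
Qed.

Lemma seq_coupling_neq0l s u v pi x x' : seq_coupling s u v pi ->
  pi (x, x') != 0 -> u x != 0.
Proof.
move=> [us p0 hsupp hr _] h; have /andP[xs x's] := hsupp _ _ h.
rewrite -hr (bigD1_seq x') //=.
have h1 : 0 < pi (x, x') by rewrite lt_neqAle eq_sym h p0.
have h2 : 0 <= \sum_(i <- s | i != x') pi (x, i) by apply: sumr_ge0.
by rewrite gt_eqF //; lra.
Qed.

Lemma seq_coupling_mass s u v pi : fsprob u -> seq_coupling s u v pi ->
  \sum_(x <- s) \sum_(x' <- s) pi (x, x') = 1.
Proof.
move=> hu hs; have [us _ _ hr _] := hs.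
rewrite (eq_bigr u) => [|x _]; last exact: hr.
by apply: fsprob_sum_seq => // x; apply: seq_coupling_suppl hs.
Qed.

Lemma cost_ge0 pi : (forall p, 0 <= pi p) -> 0 <= cost d pi.
Proof.
move=> h; apply: fsumr_ge0 => p _; apply: mulr_ge0 => //; exact: metric_ge0.
Qed.

Lemma W1_le_seq_cost s u v pi : seq_coupling s u v pi -> W1 d u v <= seq_cost s pi.
Proof.
move=> h; have [us _ hs _ _] := h.
rewrite -(cost_seq_cost us hs) /W1.
apply: ge_inf; last by exists pi; split => //; exact: seq_coupling_coupling h.
exists 0 => c [pi' [[p0 _ _ _] ->]]; exact: cost_ge0.
Qed.

Lemma coupling_prod (u v : X -> R) : fsprob u -> fsprob v ->
  coupling u v (fun p => u p.1 * v p.2).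
Proof.
move=> hu hv; have [u0 fu _] := hu; have [v0 fv _] := hv.
have fuv : finite_set (supp u `|` supp v) by rewrite finite_setU.
have [s [us hs]] := finite_set_uniq_seq fuv.
apply: (@seq_coupling_coupling s); split => //.
- by move=> p; apply: mulr_ge0.
- move=> x x' /=; rewrite mulf_eq0 negb_or => /andP[h1 h2].
  by rewrite !hs //; [right | left].
- move=> x /=; rewrite -mulr_sumr (fsprob_sum_seq hv us) ?mulr1 //.
  by move=> x' h; apply: hs; right.
- move=> x' /=; rewrite -mulr_suml (fsprob_sum_seq hu us) ?mul1r //.
  by move=> x h; apply: hs; left.
Qed.

Lemma W1_lt_coupling (u v : X -> R) e : fsprob u -> fsprob v -> W1 d u v < e ->
  exists pi, coupling u v pi /\ cost d pi < e.
Proof.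
move=> hu hv /inf_lt [].
  exists (cost d (fun p => u p.1 * v p.2)); exists (fun p => u p.1 * v p.2).
  by split => //; exact: coupling_prod.
by move=> c [pi [cp ->]] lt; exists pi.
Qed.

End Transport.

(** * Partial transport *)

Section Completion.
Variables (R : realType) (X : choiceType) (d : X -> X -> R).
Variables (s : seq X) (P Q : X -> R) (g : X * X -> R).
Hypotheses (us : uniq s) (hP : fsprob P) (hQ : fsprob Q).
Hypotheses (sP : forall x, P x != 0 -> x \in s) (sQ : forall x, Q x != 0 -> x \in s).
Hypothesis g0 : forall p, 0 <= g p.
Hypothesis g_row : forall x, x \in s -> \sum_(x' <- s) g (x, x') <= P x.
Hypothesis g_col : forall x', x' \in s -> \sum_(x <- s) g (x, x') <= Q x'.

Let mass := \sum_(x <- s) \sum_(x' <- s) g (x, x').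
Let row_defect x := P x - \sum_(x' <- s) g (x, x').
Let col_defect x' := Q x' - \sum_(x <- s) g (x, x').

(* When [mass = 1] both defects vanish, so the junk value of [/ 0] is harmless. *)
Definition completion (p : X * X) : R :=
  if (p.1 \in s) && (p.2 \in s) then
    g p + row_defect p.1 * col_defect p.2 / (1 - mass)
  else 0.

Let row_defect_ge0 x : x \in s -> 0 <= row_defect x.
Proof. by move=> xs; rewrite subr_ge0 g_row. Qed.

Let col_defect_ge0 x : x \in s -> 0 <= col_defect x.
Proof. by move=> xs; rewrite subr_ge0 g_col. Qed.

Let sum_row_defect : \sum_(x <- s) row_defect x = 1 - mass.
Proof. by rewrite sumrB (fsprob_sum_seq hP). Qed.

Let sum_col_defect : \sum_(x' <- s) col_defect x' = 1 - mass.
Proof. by rewrite sumrB (fsprob_sum_seq hQ) // /mass exchange_big. Qed.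

Let mass_le1 : 0 <= 1 - mass.
Proof. by rewrite -sum_row_defect; apply: sumr_ge0_seq. Qed.

Let defect_normalise (f : X -> R) x : (forall x, x \in s -> 0 <= f x) ->
  \sum_(x <- s) f x = 1 - mass -> x \in s -> f x * ((1 - mass) / (1 - mass)) = f x.
Proof.
move=> f0 sf xs; have [e|nz] := eqVneq (1 - mass) 0; last by rewrite mulfV ?mulr1.
by rewrite e mul0r mulr0; apply/esym; apply: (sumr_eq0_seq f0 _ xs); rewrite sf.
Qed.

Let completionE x x' : x \in s -> x' \in s ->
  completion (x, x') = g (x, x') + row_defect x * col_defect x' / (1 - mass).
Proof. by move=> xs x's; rewrite /completion /= xs x's. Qed.

Lemma completion_seq_coupling : seq_coupling s P Q completion.
Proof.
split => //.
- move=> [x x']; rewrite /completion /=; case: ifP => [/andP[xs x's]|_] //.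
  by rewrite addr_ge0 // divr_ge0 // mulr_ge0 // ?row_defect_ge0 ?col_defect_ge0.
- by move=> x x'; rewrite /completion /=; case: ifP => // _; rewrite eqxx.
- move=> x; case xs : (x \in s); last first.
    rewrite big1; last by move=> x' _; rewrite /completion /= xs.
    by apply/esym/eqP; apply: contraFT xs; apply: sP.
  rewrite (eq_big_seq _ (fun x' x's => completionE xs x's)) big_split /=.
  rewrite -mulr_suml -mulr_sumr sum_col_defect -mulrA.
  rewrite (defect_normalise row_defect_ge0 sum_row_defect xs).
  by rewrite /row_defect addrC subrK.
- move=> x'; case xs : (x' \in s); last first.
    rewrite big1; last by move=> x _; rewrite /completion /= xs andbF.
    by apply/esym/eqP; apply: contraFT xs; apply: sQ.
  rewrite (eq_big_seq _ (fun x x's => completionE x's xs)) big_split /=.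
  rewrite -!mulr_suml sum_row_defect (mulrC (1 - mass)) -mulrA.
  rewrite (defect_normalise col_defect_ge0 sum_col_defect xs).
  by rewrite /col_defect addrC subrK.
Qed.

Lemma seq_cost_completion_le (M : R) : (forall x x', d x x' <= M) ->
  seq_cost d s completion <= seq_cost d s g + (1 - mass) * M.
Proof.
move=> dM; rewrite /seq_cost.
apply: (@le_trans _ _ (\sum_(x <- s) \sum_(x' <- s)
   (g (x, x') * d x x' + row_defect x * (col_defect x' * ((1 - mass)^-1 * M))))).
  apply: ler_sum_seq => x xs; apply: ler_sum_seq => x' x's.
  rewrite completionE // mulrDl lerD2l -!mulrA.
  apply: ler_wpM2l; first exact: row_defect_ge0.
  apply: ler_wpM2l; first exact: col_defect_ge0.
  by apply: ler_wpM2l; rewrite ?invr_ge0.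
rewrite (eq_bigr (fun x => \sum_(x' <- s) g (x, x') * d x x' +
    row_defect x * (\sum_(x' <- s) col_defect x' * ((1 - mass)^-1 * M)))); last first.
  by move=> x _; rewrite big_split /= mulr_sumr.
rewrite big_split /= -mulr_suml -mulr_suml sum_row_defect sum_col_defect lerD2l.
have [->|nz] := eqVneq (1 - mass) 0; first by rewrite !mul0r.
by rewrite !mulrA mulfK.
Qed.

End Completion.

Lemma W1_le_subcoupling (R : realType) (X : choiceType) (d : X -> X -> R)
    s (P Q : X -> R) (g : X * X -> R) M : is_metric d ->
  uniq s -> fsprob P -> fsprob Q ->
  (forall x, P x != 0 -> x \in s) -> (forall x, Q x != 0 -> x \in s) ->
  (forall p, 0 <= g p) ->
  (forall x, x \in s -> \sum_(x' <- s) g (x, x') <= P x) ->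
  (forall x', x' \in s -> \sum_(x <- s) g (x, x') <= Q x') ->
  (forall x x', d x x' <= M) ->
  W1 d P Q <= seq_cost d s g + (1 - \sum_(x <- s) \sum_(x' <- s) g (x, x')) * M.
Proof.
move=> hd us hP hQ sP sQ g0 g_row g_col dM.
have /(W1_le_seq_cost hd) le_cost := completion_seq_coupling us hP hQ sP sQ g0 g_row g_col.
by apply: le_trans le_cost _; apply: seq_cost_completion_le.
Qed.

Section Reweight.
Variables (R : realType) (X : choiceType) (d : X -> X -> R).
Hypothesis hd : is_metric d.
Variables (M : R) (y : X -> R) (s : seq X) (u v : X -> R) (pi : X * X -> R).
Variables (A B : X -> R) (lam lam' : R).
Hypotheses (M0 : 0 <= M) (dM : forall x x', d x x' <= M) (hy : fsprob y).
Hypotheses (hs : seq_coupling s u v pi) (ys : forall x, y x != 0 -> x \in s).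
Hypotheses (A02 : forall x, 0 <= A x <= 2) (B02 : forall x, 0 <= B x <= 2).
Hypotheses (l01 : 0 <= lam <= 1) (l01' : 0 <= lam' <= 1).

Let g (p : X * X) := pi p * Num.min (A p.1) (B p.2) +
  (if p.1 == p.2 then Num.min lam lam' * y p.1 else 0).

Let min_AB_ge0 x x' : 0 <= Num.min (A x) (B x').
Proof. by rewrite le_min; case/andP: (A02 x) => -> _; case/andP: (B02 x') => ->. Qed.

Let min_lam_ge0 : 0 <= Num.min lam lam'.
Proof. by rewrite le_min; case/andP: l01 => -> _; case/andP: l01' => ->. Qed.

Let g_ge0 p : 0 <= g p.
Proof.
have [_ p0 _ _ _] := hs; have [y0 _ _] := hy.
case: p => x x'; rewrite /g /=; apply: addr_ge0; first exact: mulr_ge0.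
by case: ifP => // _; apply: mulr_ge0.
Qed.

Let g_row x : x \in s -> \sum_(x' <- s) g (x, x') =
  \sum_(x' <- s) pi (x, x') * Num.min (A x) (B x') + Num.min lam lam' * y x.
Proof.
have [us _ _ _ _] := hs; move=> xs; rewrite /g big_split /=; congr (_ + _).
under eq_bigr => x' _ do rewrite eq_sym.
exact: (sum_seq_delta (fun=> Num.min lam lam' * y x) us xs).
Qed.

Let g_col x' : x' \in s -> \sum_(x <- s) g (x, x') =
  \sum_(x <- s) pi (x, x') * Num.min (A x) (B x') + Num.min lam lam' * y x'.
Proof.
have [us _ _ _ _] := hs; move=> x's; rewrite /g big_split /=; congr (_ + _).
exact: (sum_seq_delta (fun x => Num.min lam lam' * y x) us x's).
Qed.

Let g_row_le x : x \in s -> \sum_(x' <- s) g (x, x') <= A x * u x + lam * y x.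
Proof.
have [_ p0 _ hr _] := hs; have [y0 _ _] := hy.
move=> xs; rewrite g_row //; apply: lerD; last first.
  by apply: ler_wpM2r => //; rewrite ge_min lexx.
rewrite -hr mulr_sumr; apply: ler_sum_seq => x' _; rewrite [X in _ <= X]mulrC.
by apply: ler_wpM2l => //; rewrite ge_min lexx.
Qed.

Let g_col_le x' : x' \in s -> \sum_(x <- s) g (x, x') <= B x' * v x' + lam' * y x'.
Proof.
have [_ p0 _ _ hc] := hs; have [y0 _ _] := hy.
move=> x's; rewrite g_col //; apply: lerD; last first.
  by apply: ler_wpM2r => //; rewrite ge_min lexx orbT.
rewrite -hc mulr_sumr; apply: ler_sum_seq => x _; rewrite [X in _ <= X]mulrC.
by apply: ler_wpM2l => //; rewrite ge_min lexx orbT.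
Qed.

Let seq_cost_g_le : seq_cost d s g <= 2 * seq_cost d s pi.
Proof.
have [_ p0 _ _ _] := hs.
rewrite /seq_cost mulr_sumr; apply: ler_sum_seq => x _; rewrite mulr_sumr.
apply: ler_sum_seq => x' _; rewrite /g /=.
case: (eqVneq x x') => [<-|_]; first by rewrite (metric_xx hd) !mulr0.
rewrite addr0 mulrAC [2 * _]mulrC.
apply: ler_wpM2l; first by apply: mulr_ge0 => //; exact: (metric_ge0 hd).
by rewrite ge_min; case/andP: (A02 x) => _ ->.
Qed.

Let g_mass_defect (sA : \sum_(x <- s) A x * u x = 1 - lam) :
  1 - \sum_(x <- s) \sum_(x' <- s) g (x, x') <=
  `|lam - lam'| + \sum_(x <- s) \sum_(x' <- s) pi (x, x') * `|A x - B x'|.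
Proof.
have [us p0 _ hr _] := hs.
have mass_g : \sum_(x <- s) \sum_(x' <- s) g (x, x') =
    \sum_(x <- s) \sum_(x' <- s) pi (x, x') * Num.min (A x) (B x') + Num.min lam lam'.
  rewrite (eq_big_seq _ g_row) big_split /= -mulr_sumr.
  by rewrite (fsprob_sum_seq hy us ys) mulr1.
have mass_A : \sum_(x <- s) \sum_(x' <- s) pi (x, x') * A x = 1 - lam.
  by rewrite -sA; apply: eq_bigr => x _; rewrite -mulr_suml hr mulrC.
have min_ge (a b : R) : a - `|a - b| <= Num.min a b.
  case: (leP a b) => h; first by rewrite lerBlDr lerDl normr_ge0.
  by rewrite lerBlDr addrC -lerBlDr ler_norm.
have mass_min : 1 - lam - \sum_(x <- s) \sum_(x' <- s) pi (x, x') * `|A x - B x'| <=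
    \sum_(x <- s) \sum_(x' <- s) pi (x, x') * Num.min (A x) (B x').
  rewrite -mass_A -sumrB; apply: ler_sum_seq => x _; rewrite -sumrB.
  by apply: ler_sum_seq => x' _; rewrite -mulrBr; apply: ler_wpM2l.
have := min_ge lam lam'; rewrite mass_g; lra.
Qed.

Lemma W1_reweight_le :
  fsprob (fun x => A x * u x + lam * y x) -> fsprob (fun x => B x * v x + lam' * y x) ->
  \sum_(x <- s) A x * u x = 1 - lam ->
  W1 d (fun x => A x * u x + lam * y x) (fun x => B x * v x + lam' * y x) <=
  2 * seq_cost d s pi + M * (`|lam - lam'| +
     \sum_(x <- s) \sum_(x' <- s) pi (x, x') * `|A x - B x'|).
Proof.
move=> hP hQ sA; have [us _ _ _ _] := hs.
have supp_in (C w : X -> R) c : (forall x, w x != 0 -> x \in s) ->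
    forall x, C x * w x + c * y x != 0 -> x \in s.
  move=> ws x; case: (eqVneq (w x) 0) => [->|/ws //].
  by case: (eqVneq (y x) 0) => [->|/ys //]; rewrite !mulr0 addr0 eqxx.
have sP := supp_in A u lam (fun x => seq_coupling_suppl hs).
have sQ := supp_in B v lam' (fun x => seq_coupling_suppr hs).
apply: le_trans (W1_le_subcoupling hd us hP hQ sP sQ g_ge0 g_row_le g_col_le dM) _.
by rewrite [M * _]mulrC; apply: lerD => //; apply: ler_wpM2r => //; apply: g_mass_defect.
Qed.

End Reweight.

(** * A Lipschitz cutoff around a finite set *)

Section Clamp.
Variable R : realFieldType.

Definition clamp (t : R) := Num.min 1 (Num.max 0 t).

Lemma clamp_cases t : [\/ t <= 0 /\ clamp t = 0, 1 <= t /\ clamp t = 1 |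
   (0 <= t <= 1) /\ clamp t = t].
Proof.
rewrite /clamp; case: (leP t 0) => h.
  by apply: Or31; split => //; rewrite ?(max_l h) min_r // ler01.
case: (leP 1 t) => h'.
  by apply: Or32; split => //; rewrite ?(max_r (ltW h)) ?min_l.
apply: Or33; split; first by rewrite (ltW h) (ltW h').
by rewrite ?(max_r (ltW h)) ?min_r // ltW.
Qed.

Lemma clamp_ge0_le1 t : 0 <= clamp t <= 1.
Proof. by case: (clamp_cases t) => -[h ->]; rewrite ?lexx ?ler01 //; lra. Qed.

Lemma clamp_dist_le a b : `|clamp a - clamp b| <= `|a - b|.
Proof.
have h1 := ler_norm (a - b); have h2 := ler_norm (b - a).
rewrite distrC in h2; rewrite ler_norml.
by case: (clamp_cases a) => -[ha ->]; case: (clamp_cases b) => -[hb ->];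
  apply/andP; split; lra.
Qed.

End Clamp.

Section Cutoff.
Variables (R : realType) (X : choiceType) (d : X -> X -> R).
Hypothesis hd : is_metric d.

Lemma mball_open x r : mopen d (mball d x r).
Proof.
move=> z; rewrite /mball /= => hz; exists (r - d x z); first by rewrite subr_gt0.
move=> w; rewrite /mball /= => hw.
by apply: (le_lt_trans (metric_triangle hd x z w)); rewrite -ltrBrDl.
Qed.

Lemma mcompact_bounded : mcompact d -> exists M, forall x x', d x x' <= M.
Proof.
move=> hc; case: (pselect (exists x : X, True)) => [[x0 _]|nX]; last first.
  by exists 0 => x; exfalso; apply: nX; exists x.
have [F [FC fF cov]] : exists F : set (set X),
    [/\ F `<=` [set U | exists x, U = mball d x 1], finite_set F &
      forall x, exists U, F U /\ U x].
  apply: hc => [U [x ->]|x]; first exact: mball_open.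
  exists (mball d x 1); split; first by exists x.
  by rewrite /mball /= (metric_xx hd) ltr01.
have [sF eF] := (finite_seqP F).1 fF.
have [M hM] : exists M, forall U, U \in sF -> forall z, U z -> d x0 z <= M.
  have : forall U, U \in sF -> exists x, U = mball d x 1.
    by move=> U Us; apply: FC; rewrite eF.
  elim: sF {eF} => [|U l IH] hl; first by exists 0 => U; rewrite in_nil.
  have [M hM] := IH (fun V Vl => hl V (mem_behead (s := U :: l) Vl)).
  have [c ->] := hl U (mem_head _ _).
  exists (Num.max (d x0 c + 1) M) => V; rewrite in_cons => /orP[/eqP ->|Vl] z hz.
    rewrite le_max; apply/orP; left.
    by apply: (le_trans (metric_triangle hd x0 c z)); rewrite lerD2l; apply/ltW.
  by rewrite le_max; apply/orP; right; apply: hM Vl z hz.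
exists (M + M) => x y.
have [U [FU Ux]] := cov x; have [V [FV Vy]] := cov y.
apply: (le_trans (metric_triangle hd x x0 y)); rewrite (metricC hd x); apply: lerD.
  by apply: (hM U) => //; move: FU; rewrite eF.
by apply: (hM V) => //; move: FV; rewrite eF.
Qed.

Lemma mopen_uniform_balls (A : set X) (l : seq X) : mopen d A ->
  (forall c, c \in l -> A c) ->
  exists2 r : R, 0 < r & forall c, c \in l -> mball d c r `<=` A.
Proof.
move=> oA; elim: l => [|c l IH] hl; first by exists 1 => //; rewrite ltr01.
have [r r0 hr] := IH (fun c' h => hl c' (mem_behead (s := c :: l) h)).
have [r' r'0 hr'] := oA c (hl c (mem_head _ _)).
exists (Num.min r r'); first by rewrite lt_min r0 r'0.
move=> c'; rewrite in_cons => /orP[/eqP ->|c'l] z; rewrite /mball /= lt_min.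
  by case/andP => _; apply: hr'.
by case/andP => h _; apply: (hr c' c'l).
Qed.

Definition dist_seq (l : seq X) (b : R) (x : X) :=
  foldr (fun c acc => Num.min (d x c) acc) b l.

Lemma dist_seq_le l b x c : c \in l -> dist_seq l b x <= d x c.
Proof.
elim: l => [|c' l IH] //; rewrite in_cons /= => /orP[/eqP ->|cl].
  by rewrite ge_min lexx.
by rewrite ge_min IH // orbT.
Qed.

Lemma dist_seq_lt l b x t : dist_seq l b x < t -> t <= b ->
  exists2 c, c \in l & d x c < t.
Proof.
elim: l => [|c l IH] /= h tb; first by have := lt_le_trans h tb; rewrite ltxx.
move: h; rewrite gt_min => /orP[h|h]; first by exists c => //; rewrite mem_head.
by have [c' c'l hc'] := IH h tb; exists c' => //; rewrite in_cons c'l orbT.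
Qed.

Lemma dist_seq_lip l b x x' : dist_seq l b x <= dist_seq l b x' + d x x'.
Proof.
elim: l => [|c l IH] /=; first by rewrite lerDl metric_ge0.
move: IH; rewrite /dist_seq; set a := foldr _ b l; set a' := foldr _ b l.
have := metric_triangle hd x x' c.
by rewrite !minEle; case: (leP (d x c) a) => ?; case: (leP (d x' c) a') => ?; lra.
Qed.

(* The cutoff is [clamp (dist(x, S) / rho - 1)], with [2 rho] a common radius
   of balls around the points of [S] inside [A]. *)
Lemma lipschitz_cutoff (S A : set X) : finite_set S -> mopen d A -> S `<=` A ->
  exists phi : X -> R, exists2 rho : R, 0 < rho & [/\
    (forall x, 0 <= phi x <= 1),
    (forall x x', `|phi x - phi x'| <= d x x' / rho),
    (forall c, S c -> phi c = 0),
    (forall x c, phi x != 0 -> S c -> rho <= d c x) &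
    (forall x, phi x < 1 -> A x)].
Proof.
move=> fS oA SA; have [l eS] := (finite_seqP S).1 fS.
have [r r0 hr] : exists2 r : R, 0 < r & forall c, c \in l -> mball d c r `<=` A.
  by apply: mopen_uniform_balls => // c cl; apply: SA; rewrite eS.
pose rho := r / 2; have rho0 : 0 < rho by rewrite divr_gt0.
pose t x := dist_seq l r x / rho - 1.
have t_lip x x' : t x - t x' <= d x x' / rho.
  rewrite /t opprB addrA subrK -mulrBl ler_pM2r ?invr_gt0 //.
  by rewrite lerBlDr addrC dist_seq_lip.
exists (fun x => clamp (t x)), rho => //; split => /=.
- by move=> x; apply: clamp_ge0_le1.
- move=> x x'; have h1 := t_lip x x'; have h2 := t_lip x' x.
  rewrite (metricC hd x') in h2; rewrite ler_norml.
  by case: (clamp_cases (t x)) => -[h ->]; case: (clamp_cases (t x')) => -[h' ->];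
    apply/andP; split; lra.
- move=> c Sc; have : dist_seq l r c <= 0.
    by rewrite -(metric_xx hd c) dist_seq_le //; move: Sc; rewrite eS.
  rewrite /t => h; have : dist_seq l r c / rho <= 0 by rewrite ler_pdivrMr // mul0r.
  by case: (clamp_cases (dist_seq l r c / rho - 1)) => -[h2 ->] //; lra.
- move=> x c hx Sc; rewrite metricC //.
  apply: (le_trans _ (@dist_seq_le l r x c _)); last by move: Sc; rewrite eS.
  have : 0 < t x.
    by move: hx; case: (clamp_cases (t x)) => -[h ->] //; rewrite ?eqxx //; lra.
  by rewrite /t subr_gt0 ltr_pdivlMr // mul1r => /ltW.
- move=> x hx; have : t x < 1.
    by move: hx; case: (clamp_cases (t x)) => -[h ->]; lra.
  rewrite /t ltrBlDr ltr_pdivrMr // => h.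
  have [c cl hc] : exists2 c, c \in l & d x c < r.
    by apply: dist_seq_lt (lexx r); move: h; rewrite /rho; lra.
  by apply: (hr c cl); rewrite /mball /= (metricC hd c).
Qed.

End Cutoff.

(** * The reweighting family *)

Section Reweighting.
Variables (R : realType) (X : choiceType).
Variables (y phi : X -> R).
Hypotheses (hy : fsprob y) (phi_supp : forall x, y x != 0 -> phi x = 0).

Definition wmass (q v : X -> R) := \sum_(x \in [set: X]) q x * v x.

Definition reweight (q : X -> R) (lam : R) (v : X -> R) : X -> R :=
  fun x => (1 - lam) * (q x * v x / wmass q v) + lam * y x.

Definition core_mass (v : X -> R) :=
  \sum_(x \in [set: X]) (if phi x == 0 then v x else 0).

(* The last condition keeps supports inside [phi < 1] as soon as [y] is mixed in. *)
Definition admissible (q : X -> R) (lam : R) :=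
  [/\ (forall x, 0 <= q x <= 1), (forall x, phi x = 0 -> q x = 1), 0 <= lam <= 1 &
      (lam != 0 -> forall x, q x != 0 -> phi x < 1)].

Lemma fsprob_seq_cover (v : X -> R) : fsprob v ->
  exists s : seq X, [/\ uniq s, (forall x, v x != 0 -> x \in s) &
                        (forall x, y x != 0 -> x \in s)].
Proof.
move=> [_ fv _]; have [_ fy _] := hy.
have fvy : finite_set (supp v `|` supp y) by rewrite finite_setU.
have [s [us hs]] := finite_set_uniq_seq fvy.
by exists s; split => // x h; apply: hs; [left|right].
Qed.

Lemma wmass_seq s q v : uniq s -> (forall x, v x != 0 -> x \in s) ->
  wmass q v = \sum_(x <- s) q x * v x.
Proof.
move=> us hs; apply: fsbig_setT_seq => // x.
by rewrite mulf_eq0 negb_or => /andP[_]; exact: hs.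
Qed.

Lemma core_mass_seq s v : uniq s -> (forall x, v x != 0 -> x \in s) ->
  core_mass v = \sum_(x <- s) (if phi x == 0 then v x else 0).
Proof.
move=> us hs; apply: fsbig_setT_seq => // x.
by case: ifP => // _; rewrite ?eqxx //; apply: hs.
Qed.

Lemma weight_mul_y q x : (forall x, phi x = 0 -> q x = 1) -> q x * y x = y x.
Proof.
move=> q1; have [->|h] := eqVneq (y x) 0; first by rewrite mulr0.
by rewrite q1 ?mul1r // phi_supp.
Qed.

Section Admissible.
Variables (q : X -> R) (lam : R) (v : X -> R).
Hypotheses (hq : admissible q lam) (hv : fsprob v).

Lemma core_mass_le_wmass : core_mass v <= wmass q v.
Proof.
have [s [us hu _]] := fsprob_seq_cover hv; have [q01 q1 _ _] := hq; have [v0 _ _] := hv.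
rewrite (core_mass_seq us hu) (wmass_seq q us hu); apply: ler_sum_seq => x _.
case: ifP => [/eqP h|_]; first by rewrite q1 ?mul1r.
by apply: mulr_ge0 => //; case/andP: (q01 x).
Qed.

Lemma wmass_le1 : wmass q v <= 1.
Proof.
have [s [us hu _]] := fsprob_seq_cover hv; have [q01 _ _ _] := hq; have [v0 _ _] := hv.
rewrite (wmass_seq q us hu) -(fsprob_sum_seq hv us hu); apply: ler_sum_seq => x _.
by rewrite ler_piMl //; case/andP: (q01 x).
Qed.

Lemma reweight_supp x : reweight q lam v x != 0 -> v x != 0 \/ y x != 0.
Proof.
move=> h; case: (eqVneq (v x) 0) => hv0; last by left.
right; apply: contraNT h => /negbNE/eqP y0.
by rewrite /reweight hv0 y0 !mulr0 mul0r mulr0 addr0.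
Qed.

Hypothesis wmass_gt0 : 0 < wmass q v.

Lemma reweight_fsprob : fsprob (reweight q lam v).
Proof.
have [q01 q1 /andP[l0 l1] _] := hq; have [v0 fv _] := hv; have [y0 fy _] := hy.
split.
- move=> x; rewrite /reweight; apply: addr_ge0; apply: mulr_ge0; rewrite ?subr_ge0 //.
  apply: divr_ge0 (ltW wmass_gt0); apply: mulr_ge0 => //; by case/andP: (q01 x).
- apply: (@sub_finite_set _ _ (supp v `|` supp y)); last by rewrite finite_setU.
  by move=> x /reweight_supp [h|h]; [left|right].
- have [s [us hu huy]] := fsprob_seq_cover hv.
  have hs x : reweight q lam v x != 0 -> x \in s.
    by case/reweight_supp; [apply: hu|apply: huy].
  rewrite fsbig_supp (fsbig_setT_seq us hs) /reweight big_split /= -!mulr_sumr.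
  rewrite (fsprob_sum_seq hy us huy) -mulr_suml -(wmass_seq q us hu).
  by rewrite mulfV ?gt_eqF // !mulr1 subrK.
Qed.

Lemma reweight_VietM (W : set (set X)) (A : set X) :
  W A -> (forall x, y x != 0 -> A x) -> (forall x, phi x < 1 -> A x) ->
  VietM W v -> VietM W (reweight q lam v).
Proof.
move=> WA yA phiA [_ [Av [WAv hAv]]]; split; first exact: reweight_fsprob.
have [_ _ _ hsupp] := hq.
case: (eqVneq lam 0) => l0.
  exists Av; split => // x; rewrite /supp /= => h; apply: hAv; rewrite /supp /=.
  apply: contraNT h => /negbNE/eqP vx0.
  by rewrite /reweight l0 vx0 mulr0 mul0r mulr0 mul0r addr0.
exists A; split => // x; rewrite /supp /= => h.
case: (eqVneq (y x) 0) => yx; last exact: yA.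
case: (eqVneq (q x) 0) => qx; last by apply: phiA; apply: hsupp.
by move: h; rewrite /reweight yx qx !(mul0r, mulr0) addr0 eqxx.
Qed.

Lemma core_mass_reweight :
  core_mass (reweight q lam v) = (1 - lam) * core_mass v / wmass q v + lam.
Proof.
have [_ q1 _ _] := hq; have [s [us hu huy]] := fsprob_seq_cover hv.
have hs x : reweight q lam v x != 0 -> x \in s.
  by case/reweight_supp; [apply: hu|apply: huy].
rewrite (core_mass_seq us hs) (core_mass_seq us hu).
rewrite (eq_bigr (fun x => (1 - lam) / wmass q v * (if phi x == 0 then v x else 0)
   + lam * y x)); last first.
  move=> x _; rewrite /reweight; case: ifP => [/eqP h|/negbT h].
    by rewrite q1 // mul1r mulrAC -mulrA.
  have -> : y x = 0 by apply/eqP; apply: contraNT h => /phi_supp ->.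
  by rewrite !mulr0 addr0.
by rewrite big_split /= -!mulr_sumr (fsprob_sum_seq hy us huy) mulr1 mulrAC.
Qed.

Lemma core_mass_reweight_ge : 0 <= core_mass v -> core_mass v <= core_mass (reweight q lam v).
Proof.
move=> n0; rewrite core_mass_reweight.
have [_ _ /andP[l0 l1] _] := hq.
have n1 : core_mass v <= 1 by apply: le_trans core_mass_le_wmass wmass_le1.
have h : core_mass v <= core_mass v / wmass q v.
  by rewrite ler_pdivlMr // ler_piMr // wmass_le1.
rewrite -mulrA; nra.
Qed.

End Admissible.

Lemma wmass_y q : (forall x, phi x = 0 -> q x = 1) -> wmass q y = 1.
Proof.
move=> q1; have [s [us hu _]] := fsprob_seq_cover hy.
rewrite (wmass_seq q us hu) -(fsprob_sum_seq hy us hu); apply: eq_bigr => x _.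
exact: weight_mul_y.
Qed.

Lemma core_mass_y : core_mass y = 1.
Proof.
have [s [us hu _]] := fsprob_seq_cover hy.
rewrite (core_mass_seq us hu) -(fsprob_sum_seq hy us hu); apply: eq_bigr => x _.
case: ifP => // /negbT h; apply/esym/eqP; apply: contraNT h => h.
by rewrite phi_supp.
Qed.

Lemma reweight_id q v : (forall x, q x = 1) -> fsprob v -> reweight q 0 v = v.
Proof.
move=> q1 hv; have [s [us hu _]] := fsprob_seq_cover hv.
have Z1 : wmass q v = 1.
  rewrite (wmass_seq q us hu) -(fsprob_sum_seq hv us hu).
  by apply: eq_bigr => x _; rewrite q1 mul1r.
apply: funext => x.
by rewrite /reweight Z1 q1 invr1 mulr1 mul1r subr0 mul1r mul0r addr0.
Qed.

Lemma reweight_y q lam : (forall x, phi x = 0 -> q x = 1) -> reweight q lam y = y.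
Proof.
move=> q1; apply: funext => x; rewrite /reweight wmass_y // invr1 mulr1.
by rewrite weight_mul_y // -mulrDl subrK mul1r.
Qed.

Lemma reweight_mix1 q v : reweight q 1 v = y.
Proof. by apply: funext => x; rewrite /reweight subrr mul0r add0r mul1r. Qed.

Section Composition.
Variables (q q' : X -> R) (lam lam' : R) (v : X -> R).
Hypotheses (hq : admissible q lam) (hq' : admissible q' lam').
Hypotheses (hv : fsprob v) (core_gt0 : 0 < core_mass v).

Let qq' x := q' x * q x.

Let admissible_qq' : admissible qq' 0.
Proof.
have [q01 q1 _ _] := hq; have [q01' q1' _ _] := hq'.
split; rewrite ?lexx ?ler01 ?eqxx //.
- move=> x; have /andP[a b] := q01 x; have /andP[a' b'] := q01' x.
  by rewrite /qq' mulr_ge0 //= mulr_ile1.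
- by move=> x h; rewrite /qq' q1 // q1' // mulr1.
Qed.

Let wmass_gt0 : 0 < wmass q v.
Proof. exact: lt_le_trans core_gt0 (core_mass_le_wmass hq hv). Qed.

Let wmass_qq'_gt0 : 0 < wmass qq' v.
Proof. exact: lt_le_trans core_gt0 (core_mass_le_wmass admissible_qq' hv). Qed.

Lemma wmass_reweight :
  wmass q' (reweight q lam v) = (1 - lam) * wmass qq' v / wmass q v + lam.
Proof.
have [_ q1' _ _] := hq'; have [s [us hu huy]] := fsprob_seq_cover hv.
have hs x : reweight q lam v x != 0 -> x \in s.
  by case/reweight_supp; [apply: hu|apply: huy].
rewrite (wmass_seq q' us hs) (wmass_seq qq' us hu).
rewrite (eq_bigr (fun x => (1 - lam) / wmass q v * (qq' x * v x) + lam * y x));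
  last first.
  move=> x _; rewrite /reweight mulrDr [q' x * (lam * _)]mulrCA weight_mul_y //.
  by congr (_ + _); rewrite /qq'; ring.
by rewrite big_split /= -!mulr_sumr (fsprob_sum_seq hy us huy) mulr1 mulrAC.
Qed.

Let Zr := wmass q' (reweight q lam v).

Let mix_le_Zr : lam <= Zr.
Proof.
have [_ _ /andP[l0 l1] _] := hq; rewrite /Zr wmass_reweight lerDr.
by rewrite divr_ge0 ?mulr_ge0 ?subr_ge0 // ltW.
Qed.

Let Zr_gt0 : 0 < Zr.
Proof.
have [_ _ /andP[l0 l1] _] := hq; rewrite /Zr wmass_reweight.
case: (eqVneq lam 0) => [->|ln0]; first by rewrite subr0 mul1r addr0 divr_gt0.
have : 0 <= (1 - lam) * wmass qq' v / wmass q v.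
  by rewrite divr_ge0 ?mulr_ge0 ?subr_ge0 // ltW.
by move: ln0; rewrite neq_lt ltNge l0 /=; lra.
Qed.

Lemma admissible_comp : admissible qq' (lam' + (1 - lam') * lam / Zr).
Proof.
have [q01 q1 _ _] := admissible_qq'.
have [_ _ /andP[l0 _] ql] := hq; have [_ _ /andP[l0' l1'] ql'] := hq'.
have lZ0 : 0 <= lam / Zr by rewrite divr_ge0 // ltW.
have lZ1 : lam / Zr <= 1 by rewrite ler_pdivrMr // mul1r.
split => //.
- rewrite -mulrA; apply/andP; split.
    by apply: addr_ge0 => //; apply: mulr_ge0; rewrite ?subr_ge0.
  by rewrite -lerBrDl -[X in _ <= X]mulr1; apply: ler_wpM2l; rewrite ?subr_ge0.
- move=> ln x; rewrite mulf_eq0 negb_or => /andP[h1 h2].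
  case: (eqVneq lam' 0) => l'0; last exact: ql'.
  case: (eqVneq lam 0) => l00; last exact: ql.
  by move: ln; rewrite l'0 l00 mulr0 mul0r addr0 eqxx.
Qed.

Lemma reweight_comp :
  reweight q' lam' (reweight q lam v) = reweight qq' (lam' + (1 - lam') * lam / Zr) v.
Proof.
have [_ _ /andP[l0 l1] _] := hq; have [_ q1' _ _] := hq'.
apply: funext => x; rewrite [LHS]/reweight -/Zr /Zr wmass_reweight /reweight.
rewrite mulrDr [q' x * (lam * _)]mulrCA weight_mul_y //.
have Zn : wmass q v != 0 by rewrite gt_eqF.
have Z2n : wmass qq' v != 0 by rewrite gt_eqF.
have pos : 0 < (1 - lam) * wmass qq' v + lam * wmass q v.
  by have := mulr_gt0 Zr_gt0 wmass_gt0; rewrite /Zr wmass_reweight mulrDl divfK.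
rewrite /qq'; field.
by rewrite Zn Z2n gt_eqF.
Qed.

End Composition.

End Reweighting.

(** * The contraction *)

Lemma dist_div_le (R : realFieldType) (a b Z Z' : R) : 0 <= b <= 1 -> 1/2 <= Z -> 1/2 <= Z' ->
  `|a / Z - b / Z'| <= 2 * `|a - b| + 4 * `|Z - Z'|.
Proof.
move=> /andP[b0 b1] hZ hZ'.
have Z0 : 0 < Z by apply: lt_le_trans hZ; rewrite divr_gt0.
have Z'0 : 0 < Z' by apply: lt_le_trans hZ'; rewrite divr_gt0.
have iZ : Z^-1 <= 2 by rewrite -div1r ler_pdivrMr //; lra.
have iZ' : Z'^-1 <= 2 by rewrite -div1r ler_pdivrMr //; lra.
have -> : a / Z - b / Z' = (a - b) * Z^-1 + b * (Z' - Z) * (Z^-1 * Z'^-1).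
  by field; rewrite !gt_eqF.
apply: (le_trans (ler_normD _ _)); apply: lerD.
  rewrite normrM; have -> : `|Z^-1| = Z^-1 by rewrite gtr0_norm // invr_gt0.
  by rewrite mulrC; apply: ler_wpM2r.
rewrite normrM; have -> : `|Z^-1 * Z'^-1| = Z^-1 * Z'^-1.
  by rewrite gtr0_norm // mulr_gt0 // invr_gt0.
rewrite !normrM (ger0_norm b0) (distrC Z').
have hP : Z^-1 * Z'^-1 <= 2 * 2 by apply: ler_pM => //; rewrite invr_ge0 ltW.
have hw : b * `|Z - Z'| <= `|Z - Z'| by rewrite ler_piMl.
rewrite mulrC; apply: (le_trans (ler_pM _ _ hP hw)).
- by rewrite mulr_ge0 // invr_ge0 ltW.
- by rewrite mulr_ge0.
lra.
Qed.

Lemma dist_mix_mul_le (R : realFieldType) (l l' q q' : R) : 0 <= l <= 1 -> 0 <= q' <= 1 ->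
  `|(1 - l) * q - (1 - l') * q'| <= `|l - l'| + `|q - q'|.
Proof.
move=> /andP[l0 l1] /andP[q0 q1].
have -> : (1 - l) * q - (1 - l') * q' = (1 - l) * (q - q') + (l' - l) * q' by ring.
rewrite addrC; apply: (le_trans (ler_normD _ _)); apply: lerD.
  by rewrite normrM (ger0_norm q0) distrC -[X in _ <= X]mulr1 ler_wpM2l.
rewrite normrM ger0_norm ?subr_ge0 // -[X in _ <= X]mul1r ler_wpM2r //; lra.
Qed.

Lemma dist_damped_weight_le (R : realFieldType) (lam q Z : R) :
  0 <= lam <= 1 -> 0 <= q <= 1 -> 0 < Z <= 1 ->
  `|(1 - lam) - (1 - lam) * q / Z| <= (1 - q) + (Z^-1 - 1).
Proof.
move=> /andP[l0 l1] /andP[q0 q1] /andP[Z0 Z1].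
have iZ : 1 <= Z^-1 by rewrite -div1r ler_pdivlMr // mul1r.
have -> : (1 - lam) - (1 - lam) * q / Z = (1 - lam) * ((1 - q) + q * (1 - Z^-1)).
  by ring.
rewrite normrM ger0_norm ?subr_ge0 //.
apply: (le_trans (_ : _ <= 1 * `|1 - q + q * (1 - Z^-1)|)); first by rewrite ler_wpM2r //; lra.
rewrite mul1r; apply: (le_trans (ler_normD _ _)); apply: lerD; first by rewrite ger0_norm; lra.
rewrite normrM ger0_norm // ler0_norm; last lra.
by rewrite opprB -[X in _ <= X]mul1r; apply: ler_wpM2r; lra.
Qed.

Section Contraction.
Variables (R : realType) (X : choiceType) (d : X -> X -> R).
Hypothesis hd : is_metric d.
Variables (y phi : X -> R) (rho M : R).
Hypotheses (hy : fsprob y) (phi_supp : forall x, y x != 0 -> phi x = 0).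
Hypotheses (rho0 : 0 < rho) (phi01 : forall x, 0 <= phi x <= 1).
Hypothesis phi_lip : forall x x', `|phi x - phi x'| <= d x x' / rho.
Hypothesis phi_far : forall x c, phi x != 0 -> y c != 0 -> rho <= d c x.
Hypotheses (M0 : 0 <= M) (dM : forall x x', d x x' <= M).

Lemma dist_wmass_le s u v pi (q q' : X -> R) a : fsprob u -> seq_coupling s u v pi ->
  (forall x x', `|q x - q' x'| <= a + d x x' / rho) ->
  `|wmass q u - wmass q' v| <= a + seq_cost d s pi / rho.
Proof.
move=> hu hs qq'; have [us p0 _ hr hc] := hs.
have -> : wmass q u = \sum_(x <- s) \sum_(x' <- s) pi (x, x') * q x.
  rewrite (wmass_seq _ us (fun x => seq_coupling_suppl hs)); apply: eq_bigr => x _.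
  by rewrite -hr mulr_sumr; apply: eq_bigr => x' _; rewrite mulrC.
have -> : wmass q' v = \sum_(x <- s) \sum_(x' <- s) pi (x, x') * q' x'.
  rewrite (wmass_seq _ us (fun x => seq_coupling_suppr hs)) exchange_big.
  apply: eq_bigr => x' _.
  by rewrite -hc mulr_sumr; apply: eq_bigr => x _; rewrite mulrC.
rewrite -sumrB; apply: (le_trans (ler_norm_sum _ _ _)).
apply: (@le_trans _ _ (\sum_(x <- s) \sum_(x' <- s)
   (pi (x, x') * a + pi (x, x') * d x x' / rho))).
  apply: ler_sum_seq => x _; rewrite -sumrB; apply: (le_trans (ler_norm_sum _ _ _)).
  apply: ler_sum_seq => x' _; rewrite -mulrBr normrM (ger0_norm (p0 _)).
  by rewrite -mulrA -mulrDr ler_wpM2l.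
rewrite (eq_bigr (fun x => (\sum_(x' <- s) pi (x, x')) * a +
    (\sum_(x' <- s) pi (x, x') * d x x') / rho)); last first.
  by move=> x _; rewrite big_split /= mulr_suml mulr_suml.
by rewrite big_split /= -mulr_suml (seq_coupling_mass hu hs) mul1r -mulr_suml.
Qed.

Lemma wmass_ge_half q lam v : admissible phi q lam -> fsprob v ->
  1/2 <= core_mass phi v -> 1/2 <= wmass q v.
Proof. by move=> hq hv h; apply: le_trans h (core_mass_le_wmass hy hq hv). Qed.

Lemma W1_reweight_pair_le q lam q' lam' s u v pi :
  admissible phi q lam -> admissible phi q' lam' -> fsprob u -> fsprob v ->
  1/2 <= core_mass phi u -> 1/2 <= core_mass phi v ->
  seq_coupling s u v pi -> (forall x, y x != 0 -> x \in s) ->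
  W1 d (reweight y q lam u) (reweight y q' lam' v) <=
  2 * seq_cost d s pi + M * (`|lam - lam'| + \sum_(x <- s) \sum_(x' <- s)
     pi (x, x') * `|(1 - lam) * q x / wmass q u - (1 - lam') * q' x' / wmass q' v|).
Proof.
move=> hq hq' hu hv nu2 nv2 hs ys.
have half_gt0 : (0 : R) < 1/2 by rewrite divr_gt0.
have wmass_gt0 q0 lam0 w : admissible phi q0 lam0 -> fsprob w ->
    1/2 <= core_mass phi w -> 0 < wmass q0 w.
  by move=> hq0 hw hn; apply: lt_le_trans half_gt0 (wmass_ge_half hq0 hw hn).
have weight02 q0 lam0 w : admissible phi q0 lam0 -> fsprob w ->
    1/2 <= core_mass phi w -> forall x, 0 <= (1 - lam0) * q0 x / wmass q0 w <= 2.
  move=> hq0 hw hn x; have [q01 _ /andP[l0 l1] _] := hq0.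
  have Z2 := wmass_ge_half hq0 hw hn; have Z0 := wmass_gt0 _ _ _ hq0 hw hn.
  have /andP[a0 a1] : 0 <= (1 - lam0) * q0 x <= 1.
    by case/andP: (q01 x) => *; rewrite mulr_ge0 ?subr_ge0 //= mulr_ile1 ?subr_ge0 //; lra.
  rewrite divr_ge0 ?(ltW Z0) //= ler_pdivrMr //; lra.
have reweightE q0 lam0 w : reweight y q0 lam0 w =
    (fun x => (1 - lam0) * q0 x / wmass q0 w * w x + lam0 * y x).
  by apply: funext => x; rewrite /reweight; congr (_ + _); ring.
have hP := reweight_fsprob hy hq hu (wmass_gt0 _ _ _ hq hu nu2).
have hQ := reweight_fsprob hy hq' hv (wmass_gt0 _ _ _ hq' hv nv2).
rewrite reweightE in hP; rewrite reweightE in hQ; rewrite !reweightE.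
have [_ _ l01 _] := hq; have [_ _ l01' _] := hq'.
apply: W1_reweight_le => //; try exact: weight02.
have [us _ _ _ _] := hs.
rewrite (eq_bigr (fun x => (1 - lam) / wmass q u * (q x * u x))); last first.
  by move=> x _; ring.
rewrite -mulr_sumr -(wmass_seq _ us (fun x => seq_coupling_suppl hs)).
by rewrite mulrAC -mulrA mulfV ?gt_eqF ?mulr1 // (wmass_gt0 _ _ _ hq hu nu2).
Qed.

Definition damp (t : R) (x : X) := 1 - clamp (2 * t) * phi x.
Definition mix (t : R) := clamp (2 * t - 1).
Definition contraction (t : R) (v : X -> R) := reweight y (damp t) (mix t) v.

Lemma admissible_contraction t : admissible phi (damp t) (mix t).
Proof.
have /andP[c0 c1] := clamp_ge0_le1 (2 * t); split; rewrite ?clamp_ge0_le1 //.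
- move=> x; have /andP[p0 p1] := phi01 x.
  have : 0 <= clamp (2 * t) * phi x <= 1 by rewrite mulr_ge0 //= mulr_ile1.
  rewrite /damp; lra.
- by move=> x h; rewrite /damp h mulr0 subr0.
- rewrite /damp /mix => mix_neq0 x.
  have : 0 < 2 * t - 1.
    by move: mix_neq0; case: (clamp_cases (2 * t - 1)) => -[h ->]; rewrite ?eqxx //; lra.
  have /andP[p0 p1] := phi01 x.
  by case: (clamp_cases (2 * t)) => -[h ->]; rewrite ?mul1r ?lt_neqAle ?p1 ?andbT;
    [lra | move=> _; apply: contra => /eqP ->; rewrite subrr | lra].
Qed.

Lemma contraction0 v : fsprob v -> contraction 0 v = v.
Proof.
move=> hv; rewrite /contraction /mix /damp mulr0 add0r.
have -> : clamp (-1 : R) = 0 by case: (clamp_cases (-1 : R)) => -[h ->] //; lra.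
have -> : clamp (0 : R) = 0 by case: (clamp_cases (0 : R)) => -[h ->] //; lra.
by apply: reweight_id => // x; rewrite mul0r subr0.
Qed.

Lemma contraction1 v : contraction 1 v = y.
Proof.
rewrite /contraction /mix mulr1.
have -> : clamp (2 - 1 : R) = 1 by case: (clamp_cases (2 - 1 : R)) => -[h ->] //; lra.
exact: reweight_mix1.
Qed.

Lemma contraction_y t : contraction t y = y.
Proof. by apply: (reweight_y hy phi_supp); case: (admissible_contraction t). Qed.

Lemma mix_dist_le t t' : `|mix t - mix t'| <= 2 * `|t - t'|.
Proof.
apply: le_trans (clamp_dist_le _ _) _.
have -> : 2 * t - 1 - (2 * t' - 1) = 2 * (t - t') by ring.
by rewrite normrM ger0_norm.
Qed.

Lemma damp_dist_le t t' x x' : `|damp t x - damp t' x'| <= 2 * `|t - t'| + d x x' / rho.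
Proof.
rewrite /damp; set c := clamp (2 * t); set c' := clamp (2 * t').
have -> : 1 - c * phi x - (1 - c' * phi x') = (c' - c) * phi x' + c * (phi x' - phi x).
  by ring.
have /andP[p0 p1] := phi01 x'; have /andP[c0 c1] := clamp_ge0_le1 (2 * t).
apply: (le_trans (ler_normD _ _)); apply: lerD.
  rewrite normrM (ger0_norm p0); apply: (le_trans (_ : _ <= `|c' - c| * 1)).
    exact: ler_wpM2l.
  rewrite mulr1 distrC; apply: le_trans (clamp_dist_le _ _) _.
  by rewrite -mulrBr normrM ger0_norm.
rewrite normrM (ger0_norm c0) distrC.
apply: (le_trans (_ : _ <= 1 * `|phi x - phi x'|)); first exact: ler_wpM2r.
by rewrite mul1r phi_lip.
Qed.

Section CouplingFromY.
Variables (s : seq X) (v : X -> R) (pi : X * X -> R).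
Hypotheses (hv : fsprob v) (hs : seq_coupling s y v pi).

Lemma core_defect_seq :
  1 - core_mass phi v = \sum_(x <- s) \sum_(x' <- s) pi (x, x') * (phi x' != 0)%:R.
Proof.
have [us _ _ _ hc] := hs; have hu x := @seq_coupling_suppr _ _ s y v pi x hs.
rewrite (core_mass_seq phi us hu) -{1}(fsprob_sum_seq hv us hu) -sumrB exchange_big.
apply: eq_bigr => x' _; rewrite -mulr_suml hc.
by case: (eqVneq (phi x') 0) => _ /=; rewrite ?mulr0 ?subr0 ?mulr1 ?subrr.
Qed.

(* Mass leaving the zero set of [phi] travels at least [rho]. *)
Lemma off_core_mass_le :
  \sum_(x <- s) \sum_(x' <- s) pi (x, x') * (phi x' != 0)%:R <= seq_cost d s pi / rho.
Proof.
have [_ p0 _ _ _] := hs.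
rewrite /seq_cost mulr_suml; apply: ler_sum_seq => x _; rewrite mulr_suml.
apply: ler_sum_seq => x' _; case: eqVneq => [_|h].
  by rewrite mulr0 divr_ge0 ?mulr_ge0 ?(metric_ge0 hd) // ltW.
case: (eqVneq (pi (x, x')) 0) => [->|hp]; first by rewrite !mul0r.
have yx : y x != 0 by apply: seq_coupling_neq0l hs hp.
rewrite mulr1 -mulrA -[X in X <= _]mulr1; apply: ler_wpM2l => //.
by rewrite ler_pdivlMr // mul1r; apply: phi_far.
Qed.

End CouplingFromY.

Lemma core_defect_le_cost v pi : fsprob v -> coupling y v pi ->
  1 - core_mass phi v <= cost d pi / rho.
Proof.
have [_ fy _] := hy; move=> hv /(coupling_seq_coupling d fy) [s [hs _ ->]].
by rewrite (core_defect_seq hv hs) (off_core_mass_le hs).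
Qed.

Lemma W1_y_reweight_le v pi q lam : fsprob v -> admissible phi q lam ->
  1/2 <= core_mass phi v -> coupling y v pi ->
  W1 d y (reweight y q lam v) <= 2 * cost d pi + M * (3 * (cost d pi / rho)).
Proof.
have [_ fy _] := hy; move=> hv hq nv2 /(coupling_seq_coupling d fy) [s [hs ys ->]].
have [us p0 _ hr _] := hs; have [q01 q1 l01 _] := hq.
have nu_y2 : 1/2 <= core_mass phi y by rewrite (core_mass_y hy phi_supp) ler_pdivrMr ?mul1r ?ler1n.
rewrite -{1}(reweight_y hy phi_supp lam q1).
apply: le_trans (W1_reweight_pair_le hq hq hy hv nu_y2 nv2 hs ys) _.
rewrite subrr normr0 add0r lerD2l ler_wpM2l // (wmass_y hy phi_supp q1).
set Z := wmass q v.
have Z2 : 1/2 <= Z := wmass_ge_half hq hv nv2.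
have Z1 : Z <= 1 := wmass_le1 hy hq hv.
have Z0 : 0 < Z by apply: lt_le_trans Z2; rewrite divr_gt0.
have iZ : Z^-1 - 1 <= 2 * (1 - core_mass phi v).
  have -> : Z^-1 - 1 = (1 - Z) * Z^-1 by field; rewrite gt_eqF.
  have i2 : Z^-1 <= 2 by rewrite -div1r ler_pdivrMr //; lra.
  apply: le_trans (_ : _ <= (1 - Z) * 2) _; first by rewrite ler_wpM2l ?subr_ge0.
  have := core_mass_le_wmass hy hq hv; rewrite -/Z; lra.
apply: (@le_trans _ _ (\sum_(x <- s) \sum_(x' <- s)
    pi (x, x') * ((phi x' != 0)%:R + (Z^-1 - 1)))).
  apply: ler_sum_seq => x _; apply: ler_sum_seq => x' _.
  case: (eqVneq (pi (x, x')) 0) => [->|hp]; first by rewrite !mul0r.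
  have yx := seq_coupling_neq0l hs hp.
  rewrite ler_wpM2l // divr1 (q1 x (phi_supp yx)) mulr1.
  apply: le_trans (dist_damped_weight_le l01 (q01 x') _) _; first by rewrite Z0.
  rewrite lerD2r; case: eqVneq => [/q1 ->|_] /=; first by rewrite subrr.
  by case/andP: (q01 x') => q0 _; rewrite lerBlDr lerDl.
rewrite (eq_bigr (fun x => \sum_(x' <- s) pi (x, x') * (phi x' != 0)%:R +
   (Z^-1 - 1) * \sum_(x' <- s) pi (x, x'))); last first.
  by move=> x _; rewrite mulr_sumr -big_split /=; apply: eq_bigr => x' _; ring.
rewrite big_split /= -mulr_sumr (seq_coupling_mass hy hs) mulr1.
have := off_core_mass_le hs; rewrite -(core_defect_seq hv hs); lra.
Qed.

Lemma W1_contraction_le u v pi t t' : fsprob u -> fsprob v ->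
  1/2 <= core_mass phi u -> 1/2 <= core_mass phi v -> coupling u v pi ->
  W1 d (contraction t u) (contraction t' v) <=
  2 * cost d pi + M * (18 * `|t - t'| + 6 * (cost d pi / rho)).
Proof.
have [_ fy _] := hy; move=> hu hv nu2 nv2 /(coupling_seq_coupling d fy) [s [hs ys ->]].
have [q01 _ l01 _] := admissible_contraction t.
have [q01' _ l01' _] := admissible_contraction t'.
apply: le_trans (W1_reweight_pair_le (admissible_contraction t)
  (admissible_contraction t') hu hv nu2 nv2 hs ys) _.
rewrite lerD2l ler_wpM2l //.
set Zu := wmass (damp t) u; set Zv := wmass (damp t') v.
set c := seq_cost d s pi / rho.
have hZ : `|Zu - Zv| <= 2 * `|t - t'| + c by apply: dist_wmass_le hu hs _ => x x'; apply: damp_dist_le.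
have weight_le x x' : `|(1 - mix t) * damp t x / Zu - (1 - mix t') * damp t' x' / Zv| <=
    16 * `|t - t'| + 4 * c + 2 * (d x x' / rho).
  have b01 : 0 <= (1 - mix t') * damp t' x' <= 1.
    have /andP[m0 m1] : 0 <= 1 - mix t' <= 1 by case/andP: l01' => *; apply/andP; split; lra.
    by case/andP: (q01' x') => q0 q1; rewrite mulr_ge0 //= mulr_ile1.
  have := dist_div_le ((1 - mix t) * damp t x) b01 (wmass_ge_half (admissible_contraction t) hu nu2)
    (wmass_ge_half (admissible_contraction t') hv nv2).
  have := dist_mix_mul_le (mix t') (damp t x) l01 (q01' x').
  have := damp_dist_le t t' x x'; have := mix_dist_le t t'.
  rewrite -/Zu -/Zv; lra.
apply: (@le_trans _ _ (2 * `|t - t'| + \sum_(x <- s) \sum_(x' <- s)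
    pi (x, x') * (16 * `|t - t'| + 4 * c + 2 * (d x x' / rho)))).
  have [_ p0 _ _ _] := hs; apply: lerD; first exact: mix_dist_le.
  by apply: ler_sum_seq => x _; apply: ler_sum_seq => x' _; apply: ler_wpM2l.
rewrite (eq_bigr (fun x => (16 * `|t - t'| + 4 * c) * \sum_(x' <- s) pi (x, x') +
    2 / rho * \sum_(x' <- s) pi (x, x') * d x x')); last first.
  by move=> x _; rewrite !mulr_sumr -big_split /=; apply: eq_bigr => x' _; ring.
rewrite big_split /= -!mulr_sumr (seq_coupling_mass hu hs) mulr1.
have -> : 2 / rho * seq_cost d s pi = 2 * c by rewrite /c; ring.
lra.
Qed.

Section InvariantNeighbourhood.
Variables (W : set (set X)) (A : set X) (N : set (X -> R)) (eN : R).
Hypotheses (WA : W A) (yA : forall x, y x != 0 -> A x) (phiA : forall x, phi x < 1 -> A x).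
Hypotheses (Yy : VietM W y) (NY : N `<=` VietM W) (Ny : N y) (eN0 : 0 < eN).
Hypothesis hN : forall v, VietM W v -> W1 d y v < eN -> N v.

(* [reweight_comp] is what makes this set invariant under [contraction]. *)
Definition invariant_nbhd : set (X -> R) :=
  [set v | VietM W v /\ 1/2 < core_mass phi v /\
           forall q lam, admissible phi q lam -> N (reweight y q lam v)].

Let half_gt0 : (0 : R) < 1/2. Proof. by rewrite divr_gt0. Qed.

Let wmass_gt0 q lam v : admissible phi q lam -> fsprob v -> 1/2 < core_mass phi v ->
  0 < wmass q v.
Proof. by move=> hq hv /ltW hn; apply: lt_le_trans half_gt0 (wmass_ge_half hq hv hn). Qed.

Lemma invariant_nbhd_sub : invariant_nbhd `<=` N.
Proof.
move=> v [[hv _] [_ hU]]; rewrite -(reweight_id hy (q := fun=> 1) (fun=> erefl) hv).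
by apply: hU; split; rewrite ?lexx ?ler01 ?eqxx //; move=> x; rewrite lexx ler01.
Qed.

Lemma nbhd_in_invariant_nbhd : nbhd_in (VietM W) (W1 d) y invariant_nbhd.
Proof.
split; first by move=> v [].
  split => //; split; first by rewrite (core_mass_y hy phi_supp); lra.
  by move=> q lam [_ q1 _ _]; rewrite (reweight_y hy phi_supp).
pose K := 2 + 3 * (M / rho).
have Mr : 0 <= M / rho by rewrite divr_ge0 // ltW.
have K0 : 0 < K by rewrite /K; lra.
exists (Num.min (rho / 2) (eN / K)); first by rewrite lt_min !divr_gt0.
move=> v Yv; have [hv _] := Yv; have [hy' _] := Yy.
move=> /(W1_lt_coupling hy' hv) [pi [cp]]; rewrite lt_min => /andP[c1 c2].
have cost0 : 0 <= cost d pi by apply: (cost_ge0 hd); case: cp.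
have hn : 1/2 < core_mass phi v.
  have := core_defect_le_cost hv cp; have : cost d pi / rho < 1 / 2.
    by rewrite ltr_pdivrMr // mulrC mul1r.
  lra.
split => //; split => // q lam hq; apply: hN.
  by apply: (reweight_VietM hy hq hv) WA yA phiA Yv; apply: wmass_gt0 hq hv hn.
apply: le_lt_trans (W1_y_reweight_le hv hq (ltW hn) cp) _.
have -> : 2 * cost d pi + M * (3 * (cost d pi / rho)) = cost d pi * K.
  by rewrite /K; field; rewrite gt_eqF.
by rewrite -ltr_pdivlMr.
Qed.

Lemma invariant_nbhd_contraction t v : 0 <= t <= 1 -> invariant_nbhd v ->
  invariant_nbhd (contraction t v).
Proof.
move=> _ [Yv [hn hU]]; have [hv _] := Yv.
have hn0 : 0 < core_mass phi v by apply: lt_trans hn.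
have ht := admissible_contraction t.
split; first exact: NY (hU _ _ ht).
split.
  apply: (lt_le_trans hn); apply: (core_mass_reweight_ge hy phi_supp ht hv) => //.
    exact: wmass_gt0 ht hv hn.
  exact: ltW.
move=> q lam hq; rewrite /contraction (reweight_comp hy phi_supp ht hq hv hn0).
exact/hU/(admissible_comp hy phi_supp ht hq hv hn0).
Qed.

Lemma contraction_continuous (t : R) u : 0 <= t <= 1 -> invariant_nbhd u ->
  forall e : R, 0 < e -> exists2 delta : R, 0 < delta &
    forall t' v, 0 <= t' <= 1 -> invariant_nbhd v -> `|t' - t| < delta ->
      W1 d u v < delta -> W1 d (contraction t u) (contraction t' v) < e.
Proof.
move=> _ [[hu _] [hnu _]] e e0.
pose K := 2 + 18 * M + 6 * (M / rho).
have Mr : 0 <= M / rho by rewrite divr_ge0 // ltW.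
have K0 : 0 < K by rewrite /K; move: Mr M0; set mr := M / rho; lra.
exists (e / K); first by rewrite divr_gt0.
move=> t' v _ [[hv _] [hnv _]] htt' huv.
have [pi [cp cpi]] := W1_lt_coupling hu hv huv.
have cost0 : 0 <= cost d pi by apply: (cost_ge0 hd); case: cp.
apply: le_lt_trans (W1_contraction_le t t' hu hv (ltW hnu) (ltW hnv) cp) _.
have -> : 2 * cost d pi + M * (18 * `|t - t'| + 6 * (cost d pi / rho)) =
  2 * cost d pi + 18 * (M * `|t - t'|) + 6 * (M / rho * cost d pi) by ring.
set del := e / K in htt' cpi *.
have -> : e = 2 * del + 18 * (M * del) + 6 * (M / rho * del).
  have -> : 2 * del + 18 * (M * del) + 6 * (M / rho * del) = del * K by rewrite /K; ring.
  by rewrite /del divfK // gt_eqF.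
have k1 : M * `|t - t'| <= M * del by apply: ler_wpM2l => //; rewrite distrC ltW.
have k2 : M / rho * cost d pi <= M / rho * del by apply: ler_wpM2l => //; exact: ltW.
lra.
Qed.

Lemma local_contraction : exists U,
  [/\ nbhd_in (VietM W) (W1 d) y U, U `<=` N & sdr_onto_point (W1 d) U y].
Proof.
exists invariant_nbhd; split.
- exact: nbhd_in_invariant_nbhd.
- exact: invariant_nbhd_sub.
exists contraction; split.
- exact: invariant_nbhd_contraction.
- by move=> u [[hu _] _]; apply: contraction0.
- by move=> u _; apply: contraction1.
- by move=> t _; apply: contraction_y.
- exact: contraction_continuous.
Qed.

End InvariantNeighbourhood.

End Contraction.

Theorem theorem4p10 (R : realType) (X : choiceType) (d : X -> X -> R)
    (W : set (set X)) :
  is_metric d -> mcompact d ->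
  (forall A, W A -> mopen d A) -> (forall x, exists A, W A /\ A x) ->
  unif_bounded d W ->
  strictly_strongly_locally_contractible (VietM W) (W1 d).
Proof.
move=> hd hc hW _ _ y Yy N [NY Ny [eN eN0 hN]].
have [hy [A [WA yA]]] := Yy; have [_ fy _] := hy.
have [M dM] := mcompact_bounded hd hc.
have [phi [rho rho0 [phi01 phi_lip phi_y phi_far phiA]]] :=
  lipschitz_cutoff hd fy (hW A WA) yA.
apply: (local_contraction hd (M := Num.max M 0) hy phi_y rho0 phi01 phi_lip phi_far
  _ _ WA yA phiA Yy NY Ny eN0 hN).
- by rewrite le_max lexx orbT.
- by move=> x x'; rewrite le_max dM.
Qed.
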